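(* The action of ${\rm PSL}_2(\mathbb Z)$ on $\Delta$ by automorphisms, in which $\rho$ sends $A\mapsto B$, $B\mapsto C$, $C\mapsto A$, $\alpha\mapsto\beta$, $\beta\mapsto\gamma$, $\gamma\mapsto\alpha$ and $\sigma$ sends $A\mapsto B$, $B\mapsto A$, $C\mapsto C+\frac{AB-BA}{q-q^{-1}}$, $\alpha\mapsto\beta$, $\beta\mapsto\alpha$, $\gamma\mapsto\gamma$, is faithful.
   Context: Let $\mathbb F$ be a field and fix a nonzero $q\in\mathbb F$ with $q^4\neq 1$. The universal Askey--Wilson algebra $\Delta$ is the associative $\mathbb F$-algebra with 1 with generators $A,B,C$ subject to the relations that each of $A+\frac{qBC-q^{-1}CB}{q^2-q^{-2}}$, $B+\frac{qCA-q^{-1}AC}{q^2-q^{-2}}$, $C+\frac{qAB-q^{-1}BA}{q^2-q^{-2}}$ is central; $\alpha,\beta,\gamma$ are these three central elements (in order) each multiplied by $q+q^{-1}$. ${\rm PSL}_2(\mathbb Z)$ is presented by generators $\rho,\sigma$ with relations $\rho^3=\sigma^2=1$; the stated assignments define an action of ${\rm PSL}_2(\mathbb Z)$ on $\Delta$ by automorphisms. *)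

From HB Require Import structures.
From mathcomp Require Import all_boot all_order all_algebra.
From Stdlib Require Import Relations.
Set Implicit Arguments. Unset Strict Implicit. Unset Printing Implicit Defensive.
Import GRing.Theory.
Local Open Scope ring_scope.

Definition central (R : pzRingType) (z : R) : Prop := forall x : R, x * z = z * x.

Definition AW_rels (F : fieldType) (q : F) (R : algType F) (a b c : R) : Prop :=
  [/\ central (a + (q ^+ 2 - q ^- 2)^-1 *: (q *: (b * c) - q^-1 *: (c * b))),
      central (b + (q ^+ 2 - q ^- 2)^-1 *: (q *: (c * a) - q^-1 *: (a * c)))
    & central (c + (q ^+ 2 - q ^- 2)^-1 *: (q *: (a * b) - q^-1 *: (b * a)))].

(* (D; A, B, C) is the universal Askey--Wilson algebra: the F-algebra presented by
   generators A, B, C and the relations AW_rels, i.e. it satisfies the relations and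
   is initial among F-algebras with three elements satisfying them. *)
Definition is_universal_AW (F : fieldType) (q : F) (D : algType F) (A B C : D) : Prop :=
  AW_rels q A B C /\
  forall (R : algType F) (a b c : R), AW_rels q a b c ->
    (exists f : {lrmorphism D -> R}, [/\ f A = a, f B = b & f C = c]) /\
    (forall f g : {lrmorphism D -> R},
        f A = g A -> f B = g B -> f C = g C -> f =1 g).

(* Generators of PSL_2(Z) = < rho, sigma | rho^3 = sigma^2 = 1 >. *)
Inductive psl_gen := Rho | Sig.

(* Words in the generators; since rho^-1 = rho^2 and sigma^-1 = sigma, every group
   element is represented by such a word, and the presented group is the quotient of
   the free monoid by the congruence generated by rho^3 = 1 and sigma^2 = 1. *)
Inductive psl_step : list psl_gen -> list psl_gen -> Prop :=
  | step_rho (u v : list psl_gen) : psl_step (u ++ Rho :: Rho :: Rho :: v) (u ++ v)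
  | step_sig (u v : list psl_gen) : psl_step (u ++ Sig :: Sig :: v) (u ++ v).

Definition psl_eq : list psl_gen -> list psl_gen -> Prop := clos_refl_sym_trans _ psl_step.

Fixpoint word_act (T : Type) (r s : T -> T) (w : list psl_gen) : T -> T :=
  match w with
  | nil => id
  | Rho :: w' => fun x => r (word_act r s w' x)
  | Sig :: w' => fun x => s (word_act r s w' x)
  end.

From HB Require Import structures.
From mathcomp Require Import all_boot all_order all_algebra.
From mathcomp Require Import boolp ring zify.
From Stdlib Require Import Relations.
Set Implicit Arguments. Unset Strict Implicit. Unset Printing Implicit Defensive.
Import GRing.Theory.
Local Open Scope ring_scope.

(** For a unimodular pair (u, v) of vectors of Z^2, the elements
    -(X^u + X^-u), -(X^v + X^-v), -(X^(u+v) + X^-(u+v)) of the quantum torus,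
    realised as twisted shift operators on functions Z^2 -> F, satisfy the
    Askey-Wilson relations with all three central elements equal to 0, so
    universality gives a representation of Delta attached to (u, v).
    Precomposing it with rho or sigma gives the representation attached to the
    image of (u, v) under the corresponding generator of SL_2(Z).  Since
    X^p + X^-p determines p up to sign, a word acting trivially on Delta fixes
    the standard pair ((1,0), (0,1)) up to sign.  Finally PSL_2(Z) = Z/3 * Z/2
    acts faithfully on pairs up to sign: in normal form, every nontrivial block
    sigma rho^e pushes the standard pair into a ping-pong cone of matrices
    with entry sum at least 3. *)

(** * Linear operators on functions on Z^2 *)

Section LinearOperators.
Variable R : comNzRingType.

Record linop := Linop {
  linop_fun :> (int * int -> R) -> int * int -> R;
  linopD (x y : int * int -> R) :
    linop_fun (fun r => x r + y r) = fun r => linop_fun x r + linop_fun y r;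
  linopZ (k : R) (x : int * int -> R) :
    linop_fun (fun r => k * x r) = fun r => k * linop_fun x r }.

Lemma linop_ext (f g : linop) : (forall x r, f x r = g x r) -> f = g.
Proof.
case: f g => [f fD fZ] [g gD gZ] /= fg.
have efg : f = g by apply/funext => x; apply/funext => r; exact: fg.
by subst g; congr Linop; apply: Prop_irrelevance.
Qed.

HB.instance Definition _ := gen_eqMixin linop.
HB.instance Definition _ := gen_choiceMixin linop.

Program Definition linop0 : linop := @Linop (fun _ _ => 0) _ _.
Next Obligation. by apply/funext => r; rewrite addr0. Qed.
Next Obligation. by apply/funext => r; rewrite mulr0. Qed.

Program Definition linop_add (f g : linop) : linop :=
  @Linop (fun x r => f x r + g x r) _ _.
Next Obligation. by apply/funext => r; rewrite (linopD f) (linopD g) addrACA. Qed.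
Next Obligation. by apply/funext => r; rewrite (linopZ f) (linopZ g) mulrDr. Qed.

Program Definition linop_opp (f : linop) : linop := @Linop (fun x r => - f x r) _ _.
Next Obligation. by apply/funext => r; rewrite (linopD f) opprD. Qed.
Next Obligation. by apply/funext => r; rewrite (linopZ f) mulrN. Qed.

Program Definition linop_comp (f g : linop) : linop := @Linop (fun x => f (g x)) _ _.
Next Obligation. by rewrite (linopD g) (linopD f). Qed.
Next Obligation. by rewrite (linopZ g) (linopZ f). Qed.

Program Definition linop_id : linop := @Linop id _ _.

Program Definition linop_scale (k : R) (f : linop) : linop :=
  @Linop (fun x r => k * f x r) _ _.
Next Obligation. by apply/funext => r; rewrite (linopD f) mulrDr. Qed.
Next Obligation. by apply/funext => r; rewrite (linopZ f) mulrCA. Qed.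

Fact linop_addA : associative linop_add.
Proof. by move=> f g h; apply: linop_ext => x r /=; rewrite addrA. Qed.
Fact linop_addC : commutative linop_add.
Proof. by move=> f g; apply: linop_ext => x r /=; rewrite addrC. Qed.
Fact linop_add0 : left_id linop0 linop_add.
Proof. by move=> f; apply: linop_ext => x r /=; rewrite add0r. Qed.
Fact linop_addN : left_inverse linop0 linop_opp linop_add.
Proof. by move=> f; apply: linop_ext => x r /=; rewrite addNr. Qed.

HB.instance Definition _ :=
  GRing.isZmodule.Build linop linop_addA linop_addC linop_add0 linop_addN.

Fact linop_compA : associative linop_comp. Proof. by move=> f g h; apply: linop_ext. Qed.
Fact linop_id_comp : left_id linop_id linop_comp. Proof. by move=> f; apply: linop_ext. Qed.
Fact linop_comp_id : right_id linop_id linop_comp. Proof. by move=> f; apply: linop_ext. Qed.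
Fact linop_compDl : left_distributive linop_comp +%R.
Proof. by move=> f g h; apply: linop_ext. Qed.
Fact linop_compDr : right_distributive linop_comp +%R.
Proof. by move=> f g h; apply: linop_ext => x r /=; rewrite (linopD f). Qed.
Fact linop_id_neq0 : linop_id != 0.
Proof.
apply/eqP => /(congr1 (fun f : linop => f (fun _ => 1) (0, 0))) /= /eqP.
by rewrite oner_eq0.
Qed.

HB.instance Definition _ := GRing.Zmodule_isNzRing.Build linop
  linop_compA linop_id_comp linop_comp_id linop_compDl linop_compDr linop_id_neq0.

Fact linop_scaleA a b (f : linop) : linop_scale a (linop_scale b f) = linop_scale (a * b) f.
Proof. by apply: linop_ext => x r /=; rewrite mulrA. Qed.
Fact linop_scale1 : left_id 1 linop_scale.
Proof. by move=> f; apply: linop_ext => x r /=; rewrite mul1r. Qed.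
Fact linop_scaleDr : right_distributive linop_scale +%R.
Proof. by move=> a f g; apply: linop_ext => x r /=; rewrite mulrDr. Qed.
Fact linop_scaleDl f : {morph linop_scale^~ f : a b / a + b}.
Proof. by move=> a b; apply: linop_ext => x r /=; rewrite mulrDl. Qed.

HB.instance Definition _ := GRing.Zmodule_isLmodule.Build R linop
  linop_scaleA linop_scale1 linop_scaleDr linop_scaleDl.

Fact linop_scaleAl (a : R) (f g : linop) : a *: (f * g) = (a *: f) * g.
Proof. by apply: linop_ext. Qed.
HB.instance Definition _ := GRing.Lmodule_isLalgebra.Build R linop linop_scaleAl.

Fact linop_scaleAr (a : R) (f g : linop) : a *: (f * g) = f * (a *: g).
Proof. by apply: linop_ext => x r /=; rewrite (linopZ f). Qed.
HB.instance Definition _ := GRing.Lalgebra_isAlgebra.Build R linop linop_scaleAr.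

End LinearOperators.

(** * The quantum torus *)

Lemma vaddvv_eq0 (s : int * int) : (s + s == 0) = (s == 0).
Proof.
apply/eqP/eqP => [|->]; last by rewrite addr0.
by case: s => a b [ha hb]; congr pair; lia.
Qed.

Definition det (p s : int * int) : int := p.1 * s.2 - p.2 * s.1.
Arguments det : simpl never.

Lemma detNl p s : det (- p) s = - det p s.
Proof. by rewrite /det /=; ring. Qed.
Lemma detNr p s : det p (- s) = - det p s.
Proof. by rewrite /det /=; ring. Qed.
Lemma detDl p p' s : det (p + p') s = det p s + det p' s.
Proof. by rewrite /det /=; ring. Qed.
Lemma detDr p s s' : det p (s + s') = det p s + det p s'.
Proof. by rewrite /det /=; ring. Qed.
Lemma det_swap p s : det s p = - det p s.
Proof. by rewrite /det; ring. Qed.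
Lemma detvv p : det p p = 0.
Proof. by rewrite /det mulrC subrr. Qed.
Lemma det_cycle u v w : u + v + w = 0 -> det v w = det u v.
Proof.
move/eqP; rewrite addrC addr_eq0 => /eqP ->.
by rewrite detNr detDr detvv addr0 det_swap opprK.
Qed.

Section QuantumTorus.
Variables (R : comUnitRingType) (q : R).
Hypothesis q_unit : q \is a GRing.unit.

Program Definition qmono (p : int * int) : linop R :=
  @Linop R (fun x r => q ^ det p r * x (r - p)) _ _.
Next Obligation. by apply/funext => r; rewrite mulrDr. Qed.
Next Obligation. by apply/funext => r; rewrite mulrCA. Qed.

Lemma qmonoM p s : qmono p * qmono s = q ^ det p s *: qmono (p + s).
Proof.
apply: linop_ext => x r /=; rewrite !mulrA -!exprzDr // [- (p + s)]opprD.
rewrite detDr detDl detNr (det_swap s p).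
by congr (q ^ _ * x _); [rewrite addrA addrC | rewrite addrA].
Qed.

Definition qsym p : linop R := qmono p + qmono (- p).

Lemma qsymN p : qsym (- p) = qsym p.
Proof. by rewrite /qsym opprK addrC. Qed.

Lemma qsymM p s :
  qsym p * qsym s = q ^ det p s *: qsym (p + s) + q ^ (- det p s) *: qsym (p - s).
Proof.
rewrite /qsym mulrDl !mulrDr !qmonoM !(detNl, detNr) opprK !scalerDr -opprD.
have -> : - p + s = - (p - s) by rewrite opprB addrC.
by rewrite [X in _ + X = _]addrC addrACA.
Qed.

Lemma qsym_inj p s : s != 0 -> qsym p = qsym s -> p = s \/ p = - s.
Proof using Type.
(* Evaluate both operators on the indicator function of 0, at the point s. *)
move=> s_neq0 /(congr1 (fun f : linop R => f (fun r => (r == 0)%:R) s)) /=.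
rewrite subrr eqxx detvv expr0z mul1r !opprK.
rewrite vaddvv_eq0 (negbTE s_neq0) mulr0 addr0 subr_eq0 addr_eq0.
case: eqP => [-> | _]; first by left.
case: eqP => [-> | _]; first by right; rewrite opprK.
by rewrite !mulr0 addr0 => /eqP; rewrite eq_sym oner_eq0.
Qed.

Lemma qsymM_det1 u v : det u v = 1 ->
  qsym u * qsym v = q *: qsym (u + v) + q^-1 *: qsym (u - v).
Proof. by move=> uv1; rewrite qsymM uv1. Qed.

Lemma qsymM_det1C u v : det u v = 1 ->
  qsym v * qsym u = q^-1 *: qsym (u + v) + q *: qsym (u - v).
Proof.
move=> uv1; rewrite qsymM det_swap uv1 opprK [v + u]addrC -[v - u]opprB qsymN.
by rewrite addrC.
Qed.

Lemma qsym_qcommutator u v : det u v = 1 ->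
  q *: (qsym u * qsym v) - q^-1 *: (qsym v * qsym u) = (q ^+ 2 - q ^- 2) *: qsym (u + v).
Proof.
move=> uv1; rewrite qsymM_det1 // qsymM_det1C //.
move: (qsym (u + v)) (qsym (u - v)) => Y X.
rewrite !scalerDr !scalerA mulrV // mulVr // opprD addrACA subrr addr0 -scalerBl.
by rewrite -expr2 -exprVn expr2.
Qed.

Lemma qsym_commutator u v : det u v = 1 ->
  qsym u * qsym v - qsym v * qsym u = (q - q^-1) *: (qsym (u + v) - qsym (u - v)).
Proof.
move=> uv1; rewrite qsymM_det1 // qsymM_det1C //.
move: (qsym (u + v)) (qsym (u - v)) => Y X.
by rewrite opprD addrACA -!scalerBl scalerBr -scaleNr opprB.
Qed.

End QuantumTorus.

Lemma central0 (R : pzRingType) : central (0 : R).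
Proof. by move=> x; rewrite mulr0 mul0r. Qed.

Section AskeyWilsonTorus.
Variables (F : fieldType) (q : F).
Hypotheses (q_neq0 : q != 0) (q4_neq1 : q ^+ 4 != 1).

Let q_unit : q \is a GRing.unit. Proof. by rewrite unitfE. Qed.

Lemma q2_diff_neq0 : q ^+ 2 - q ^- 2 != 0.
Proof.
rewrite subr_eq0; apply: contra q4_neq1 => /eqP q2E.
by rewrite (_ : 4 = 2 + 2)%N // exprD {1}q2E mulVf // expf_neq0.
Qed.

Lemma q_diff_neq0 : q - q^-1 != 0.
Proof.
rewrite subr_eq0; apply: contra q2_diff_neq0 => /eqP qE.
by rewrite -exprVn -qE subrr.
Qed.

Lemma AW_central_qsym u v w : u + v + w = 0 -> det u v = 1 ->
  central (- qsym q w + (q ^+ 2 - q ^- 2)^-1 *: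
    (q *: (- qsym q u * - qsym q v) - q^-1 *: (- qsym q v * - qsym q u))).
Proof.
move/eqP; rewrite addrC addr_eq0 => /eqP -> uv1.
rewrite qsymN !mulrNN (qsym_qcommutator q_unit uv1) scalerA mulVf ?q2_diff_neq0 //.
by rewrite scale1r addNr; apply: central0.
Qed.

Lemma AW_rels_qsym u v w : u + v + w = 0 -> det u v = 1 ->
  AW_rels q (- qsym q u) (- qsym q v) (- qsym q w).
Proof.
move=> uvw0 uv1.
have vwu0 : v + w + u = 0 by rewrite addrC addrA.
have wuv0 : w + u + v = 0 by rewrite addrC addrA.
have vw1 : det v w = 1 by rewrite (det_cycle uvw0).
have wu1 : det w u = 1 by rewrite (det_cycle vwu0).
by split; apply: AW_central_qsym.
Qed.

Lemma qsym_sigma u v : det u v = 1 ->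
  - qsym q (u + v) + (q - q^-1)^-1 *: (- qsym q u * - qsym q v - - qsym q v * - qsym q u)
  = - qsym q (u - v).
Proof.
move=> uv1; rewrite !mulrNN (qsym_commutator q_unit uv1) scalerA mulVf ?q_diff_neq0 //.
by rewrite scale1r addKr.
Qed.

End AskeyWilsonTorus.

(** * PSL_2(Z) acting on frames *)

(* A frame (p, s) stands for the integer matrix with rows p and s; Rho and Sig
   act by left multiplication with [[0, 1], [-1, -1]] and [[0, 1], [-1, 0]]. *)
Definition frame := ((int * int) * (int * int))%type.

Definition frame1 : frame := ((1, 0), (0, 1)).

Definition unimodular (g : frame) := det g.1 g.2 = 1.

Definition gen_frame (x : psl_gen) (g : frame) : frame :=
  if x is Rho then (g.2, - (g.1 + g.2)) else (g.2, - g.1).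

Definition word_frame (w : seq psl_gen) (g : frame) : frame :=
  foldl (fun g x => gen_frame x g) g w.

Definition sign_eq (g g' : frame) := g = g' \/ g = - g'.

Lemma gen_frame_unimodular x g : unimodular g -> unimodular (gen_frame x g).
Proof.
rewrite /unimodular; case: x => /= <-; last by rewrite detNr det_swap opprK.
by apply: det_cycle; rewrite subrr.
Qed.

Lemma word_frame_unimodular w g : unimodular g -> unimodular (word_frame w g).
Proof. by elim: w g => [|x w IHw] g //= ug; apply/IHw/gen_frame_unimodular. Qed.

Lemma word_frame_cons x w g : word_frame (x :: w) g = word_frame w (gen_frame x g).
Proof. by []. Qed.

Lemma word_frame_cat u v g : word_frame (u ++ v) g = word_frame v (word_frame u g).
Proof. exact: foldl_cat. Qed.

Lemma gen_frameN x g : gen_frame x (- g) = - gen_frame x g.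
Proof. by case: x => //=; rewrite -opprD. Qed.

Lemma word_frameN w g : word_frame w (- g) = - word_frame w g.
Proof. by elim: w g => [|x w IHw] g //=; rewrite gen_frameN IHw. Qed.

Lemma gen_frame_rho3 g : gen_frame Rho (gen_frame Rho (gen_frame Rho g)) = g.
Proof.
case: g => p s /=.
have -> : s - (p + s) = - p by rewrite opprD addrCA subrr addr0.
by rewrite opprK opprD opprK addrC addKr.
Qed.

Lemma gen_frame_sigma2 g : gen_frame Sig (gen_frame Sig g) = - g.
Proof. by case: g. Qed.

Lemma psl_step_sign_eq u v g : psl_step u v -> sign_eq (word_frame u g) (word_frame v g).
Proof.
case=> {}u {}v; rewrite /sign_eq !word_frame_cat !word_frame_cons.
- by rewrite gen_frame_rho3; left.
- by rewrite gen_frame_sigma2 word_frameN; right.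
Qed.

Lemma sign_eq_refl g : sign_eq g g.
Proof. by left. Qed.

Lemma sign_eq_sym g g' : sign_eq g g' -> sign_eq g' g.
Proof. by case=> ->; [left | right; rewrite opprK]. Qed.

Lemma sign_eq_trans g1 g2 g3 : sign_eq g1 g2 -> sign_eq g2 g3 -> sign_eq g1 g3.
Proof. by case=> -> [] ->; rewrite /sign_eq ?opprK; [left | right | right | left]. Qed.

Lemma psl_eq_sign_eq u v g : psl_eq u v -> sign_eq (word_frame u g) (word_frame v g).
Proof.
elim=> {u v} [u v /psl_step_sign_eq // | u | u v _ | u v w _ uv _ vw].
- exact: sign_eq_refl.
- exact: sign_eq_sym.
- exact: sign_eq_trans uv vw.
Qed.

Lemma psl_eq_cons x u v : psl_eq u v -> psl_eq (x :: u) (x :: v).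
Proof.
elim=> {u v} [u v [] u' v' | u | u v _ | u v w _ uv _ vw].
- exact/rst_step/(step_rho (x :: u')).
- exact/rst_step/(step_sig (x :: u')).
- exact: rst_refl.
- exact: rst_sym.
- exact: rst_trans uv vw.
Qed.

Inductive rho_exp := Rho1 | Rho2.

Definition rho_pow (e : rho_exp) : seq psl_gen :=
  if e is Rho1 then [:: Rho] else [:: Rho; Rho].

Definition normal_form := (option rho_exp * seq rho_exp * bool)%type.

Definition nf_word (n : normal_form) : seq psl_gen :=
  let: (e, bs, t) := n in
  oapp rho_pow [::] e ++ flatten [seq Sig :: rho_pow b | b <- bs] ++
  (if t then [:: Sig] else [::]).

Definition nf_nil : normal_form := (None, [::], false).

Definition nf_cons (x : psl_gen) (n : normal_form) : normal_form :=
  match x, n with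
  | Rho, (None, bs, t) => (Some Rho1, bs, t)
  | Rho, (Some Rho1, bs, t) => (Some Rho2, bs, t)
  | Rho, (Some Rho2, bs, t) => (None, bs, t)
  | Sig, (Some e, bs, t) => (None, e :: bs, t)
  | Sig, (None, e :: bs, t) => (Some e, bs, t)
  | Sig, (None, [::], t) => (None, [::], ~~ t)
  end.

Lemma nf_consP x n : psl_eq (x :: nf_word n) (nf_word (nf_cons x n)).
Proof.
case: x; case: n => [[[[]|] [|b bs]] t] /=; try exact: rst_refl;
  try exact/rst_step/(step_rho [::]); try exact/rst_step/(step_sig [::]).
all: try by case: b; exact: rst_refl.
all: try by case: b; exact/rst_step/(step_sig [::]).
by case: t; [exact/rst_step/(step_sig [::] [::]) | exact: rst_refl].
Qed.

Definition nf_of (w : seq psl_gen) : normal_form := foldr nf_cons nf_nil w.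

Lemma nf_ofP w : psl_eq w (nf_word (nf_of w)).
Proof.
elim: w => [|x w IHw] /=; first exact: rst_refl.
exact: rst_trans (psl_eq_cons x IHw) (nf_consP x _).
Qed.

Definition frame_mul (g G : frame) : frame :=
  let vmul v := (v.1 * G.1.1 + v.2 * G.2.1, v.1 * G.1.2 + v.2 * G.2.2) in
  (vmul g.1, vmul g.2).

Lemma gen_frame_mul x g G : gen_frame x (frame_mul g G) = frame_mul (gen_frame x g) G.
Proof.
case: g G => [[a b] [c d]] [[a' b'] [c' d']].
by case: x; rewrite /frame_mul /=; congr ((_, _), (_, _)); rewrite /=; ring.
Qed.

Lemma word_frame_mul w g G : word_frame w (frame_mul g G) = frame_mul (word_frame w g) G.
Proof. by elim: w g => [|x w IHw] g //=; rewrite gen_frame_mul IHw. Qed.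

Lemma frame_mul1g G : frame_mul frame1 G = G.
Proof.
by case: G => [[a b] [c d]]; rewrite /frame_mul /=; congr ((_, _), (_, _)); ring.
Qed.

Definition in_cone (g : frame) := exists a b c d : int,
  [/\ 0 <= a, 0 <= b, 0 <= c, 0 <= d & 3 <= a + b + c + d] /\
  sign_eq g ((a, - c), (- b, d)).

Lemma in_coneN g : in_cone g -> in_cone (- g).
Proof.
case=> a [b [c [d [abcd g_sign]]]]; exists a, b, c, d; split => //.
by case: g_sign => ->; [right | left; rewrite opprK].
Qed.

Lemma in_cone_block e g : in_cone g -> in_cone (word_frame (Sig :: rho_pow e) g).
Proof.
case=> a [b [c [d [[a0 b0 c0 d0 abcd3] g_sign]]]].
suff g0_cone : in_cone (word_frame (Sig :: rho_pow e) ((a, - c), (- b, d))).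
  by case: g_sign => ->; rewrite ?word_frameN; last apply: in_coneN.
case: e.
- exists a, (a + b), c, (c + d); split; first by split; lia.
  by right; rewrite /=; congr ((_, _), (_, _)); rewrite /=; ring.
- exists (a + b), b, (c + d), d; split; first by split; lia.
  by left; rewrite /=; congr ((_, _), (_, _)); rewrite /=; ring.
Qed.

Lemma in_cone_blocks bs g :
  in_cone g -> in_cone (word_frame (flatten [seq Sig :: rho_pow b | b <- bs]) g).
Proof.
elim: bs g => [|b bs IHbs] g //= g_cone.
by rewrite word_frame_cat; apply/IHbs/in_cone_block.
Qed.

Lemma in_cone_blocks1 e es :
  in_cone (word_frame (flatten [seq Sig :: rho_pow b | b <- e :: es]) frame1).
Proof.
have -> : flatten [seq Sig :: rho_pow b | b <- e :: es] =
  (Sig :: rho_pow e) ++ flatten [seq Sig :: rho_pow b | b <- es] by [].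
rewrite word_frame_cat; apply: in_cone_blocks.
case: e; [exists 1, 1, 0, 1 | exists 1, 0, 1, 1]; split => //.
- by right.
- by left.
Qed.

Lemma nf_word_sign_eq1 n : sign_eq (word_frame (nf_word n) frame1) frame1 -> n = nf_nil.
Proof.
case: n => [[e bs] t]; rewrite /nf_word !word_frame_cat; case: bs => [|b bs].
  by case: e => [[]|]; case: t => //; case=> /eqP.
rewrite -[word_frame (oapp _ _ e) _]frame_mul1g !word_frame_mul.
have [a [b' [c [d [[a0 b0 c0 d0 abcd3] []->]]]]] := in_cone_blocks1 b bs;
  case: e => [[]|]; case: t; rewrite /sign_eq /frame_mul /=; case=> -[] *; lia.
Qed.

Lemma psl_eq_nil_of_frame1 w : sign_eq (word_frame w frame1) frame1 -> psl_eq w nil.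
Proof.
move=> w1; have w_nf := nf_ofP w.
suff nf_nil_w : nf_of w = nf_nil by rewrite nf_nil_w in w_nf.
apply: nf_word_sign_eq1; apply: sign_eq_trans w1.
exact/sign_eq_sym/psl_eq_sign_eq.
Qed.

(** * Representations of Delta on the quantum torus *)

Section Representation.
Variables (F : fieldType) (q : F) (D : algType F) (A B C : D).
Hypotheses (q_neq0 : q != 0) (q4_neq1 : q ^+ 4 != 1).
Hypothesis D_univ : is_universal_AW q A B C.

Definition represents (h : {lrmorphism D -> linop F}) (g : frame) :=
  [/\ h A = - qsym q g.1, h B = - qsym q g.2 & h C = - qsym q (g.1 + g.2)].

Lemma AW_rels_frame g : unimodular g ->
  AW_rels q (- qsym q g.1) (- qsym q g.2) (- qsym q (g.1 + g.2)).
Proof.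
by move=> ug; rewrite -(qsymN q (g.1 + g.2)); apply: AW_rels_qsym => //; rewrite subrr.
Qed.

Lemma exists_represents g : unimodular g -> exists h, represents h g.
Proof.
move=> ug; have [[h [hA hB hC]] _] := D_univ.2 _ _ _ _ (AW_rels_frame ug).
by exists h.
Qed.

Lemma represents_unique g h h' : unimodular g ->
  represents h g -> represents h' g -> h =1 h'.
Proof.
move=> ug [hA hB hC] [h'A h'B h'C].
by apply: (D_univ.2 _ _ _ _ (AW_rels_frame ug)).2; rewrite ?hA ?hB ?hC.
Qed.

Lemma represents_frame1 h g : represents h frame1 -> represents h g -> sign_eq g frame1.
Proof.
move=> [h1A h1B h1C] [hA hB hC].
have inj u v : - qsym q u = - qsym q v -> v != 0 -> u = v \/ u = - v.
  by move=> /oppr_inj uv v_neq0; apply: qsym_inj v_neq0 uv.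
move: (inj _ _ (etrans (esym hA) h1A) isT) (inj _ _ (etrans (esym hB) h1B) isT)
  (inj _ _ (etrans (esym hC) h1C) isT).
case: g {hA hB hC} => [[a b] [c d]] /=; rewrite /sign_eq.
move=> [] [? ?] [] [? ?] [] [? ?]; subst a b c d;
  first [by left | by right | lia].
Qed.

Variables (rho sigma : {lrmorphism D -> D}).
Hypotheses (rhoA : rho A = B) (rhoB : rho B = C) (rhoC : rho C = A).
Hypotheses (sigmaA : sigma A = B) (sigmaB : sigma B = A)
  (sigmaC : sigma C = C + (q - q^-1)^-1 *: (A * B - B * A)).

Lemma represents_rho h g : represents h g -> represents (h \o rho) (gen_frame Rho g).
Proof.
case=> hA hB hC; split=> /=; rewrite ?rhoA ?rhoB ?rhoC ?hA ?hB ?hC ?qsymN //.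
have -> : g.2 - (g.1 + g.2) = - g.1 by rewrite opprD addrCA subrr addr0.
by rewrite qsymN.
Qed.

Lemma represents_sigma h g : unimodular g ->
  represents h g -> represents (h \o sigma) (gen_frame Sig g).
Proof.
move=> ug [hA hB hC]; split=> /=; rewrite ?sigmaA ?sigmaB ?hA ?hB ?qsymN //.
rewrite sigmaC linearD linearZ linearB !rmorphM /= hA hB hC qsym_sigma //.
by rewrite -[g.2 - g.1]opprB qsymN.
Qed.

Lemma represents_word_act w g h h' : unimodular g -> represents h g ->
  represents h' (word_frame w g) -> forall x, h (word_act rho sigma w x) = h' x.
Proof.
elim: w g h => [|[] w IHw] g h ug hg hw x /=.
- exact: represents_unique ug hg hw x.
- exact: IHw _ (h \o rho) (gen_frame_unimodular Rho ug) (represents_rho hg) hw x.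
- exact: IHw _ (h \o sigma) (gen_frame_unimodular Sig ug) (represents_sigma ug hg) hw x.
Qed.

Lemma sign_eq_frame1_of_trivial_action w :
  (forall x, word_act rho sigma w x = x) -> sign_eq (word_frame w frame1) frame1.
Proof.
move=> w_triv; have u1 : unimodular frame1 by [].
have [h1 h1_rep] := exists_represents u1.
have [hw hw_rep] := exists_represents (word_frame_unimodular w u1).
have h1w x : h1 x = hw x by rewrite -(represents_word_act u1 h1_rep hw_rep) w_triv.
apply: (represents_frame1 h1_rep).
by case: hw_rep => hA hB hC; split; rewrite h1w.
Qed.

End Representation.

Theorem theorem3p13 (F : fieldType) (q : F) (hq0 : q != 0) (hq4 : q ^+ 4 != 1)
  (D : algType F) (A B C : D) (hD : is_universal_AW q A B C)
  (rho sigma : {lrmorphism D -> D})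
  (hrA : rho A = B) (hrB : rho B = C) (hrC : rho C = A)
  (hsA : sigma A = B) (hsB : sigma B = A)
  (hsC : sigma C = C + (q - q^-1)^-1 *: (A * B - B * A)) :
  forall w : list psl_gen,
    (forall x : D, word_act rho sigma w x = x) -> psl_eq w nil.
Proof.
move=> w w_triv; apply: psl_eq_nil_of_frame1.
exact: (sign_eq_frame1_of_trivial_action hq0 hq4 hD hrA hrB hrC hsA hsB hsC).
Qed.
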